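(* Let $S$ be an Arf numerical semigroup and let $a,R$ be positive integers. Then $\overline{S}=aS\cup\{m\in\mathbb{N}_0:\ m\ge R\}$ is an Arf semigroup.
   Context: A numerical semigroup is a submonoid $S$ of $(\mathbb{N}_0,+)$ with finite complement, with elements listed increasingly $\rho_1=0<\rho_2<\cdots$. $S$ is Arf if $\rho_i+\rho_j-\rho_k\in S$ for all positive integers $i\ge j\ge k$. $aS=\{as:\ s\in S\}$. *)

From Stdlib Require Import Arith Lia.

Definition numerical_semigroup (S : nat -> Prop) : Prop :=
  S 0 /\
  (forall x y, S x -> S y -> S (x + y)) /\
  (exists N, forall n, N <= n -> S n).

(* Arf: rho_i + rho_j - rho_k in S for all i >= j >= k, where rho is the
   increasing enumeration of S; equivalently for all elements x >= y >= z of S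
   (the enumeration is strictly increasing, so index order = value order). *)
Definition Arf (S : nat -> Prop) : Prop :=
  numerical_semigroup S /\
  (forall x y z, S x -> S y -> S z -> z <= y -> y <= x -> S (x + y - z)).

Definition scaled_closure (S : nat -> Prop) (a R : nat) : nat -> Prop :=
  fun m => (exists s, S s /\ m = a * s) \/ R <= m.

From Stdlib Require Import Arith Lia.

(* If the largest element x of a triple x >= y >= z lies beyond R, then so does
   x + y - z >= x.  Otherwise all three lie below R, hence in aS, and dividing
   by a turns the triple into one of S, whose Arf property gives the claim. *)

Definition add_closed (T : nat -> Prop) : Prop :=
  forall x y, T x -> T y -> T (x + y).

Definition arf_closed (T : nat -> Prop) : Prop :=
  forall x y z, T x -> T y -> T z -> z <= y -> y <= x -> T (x + y - z).

Definition scaled (S : nat -> Prop) (a : nat) : nat -> Prop :=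
  fun m => exists s, S s /\ m = a * s.

Definition union_ge (T : nat -> Prop) (R : nat) : nat -> Prop :=
  fun m => T m \/ R <= m.

Lemma scaled_closure_union_ge (S : nat -> Prop) (a R : nat) :
  scaled_closure S a R = union_ge (scaled S a) R.
Proof. reflexivity. Qed.

Lemma scaled_add_closed (S : nat -> Prop) (a : nat) :
  add_closed S -> add_closed (scaled S a).
Proof.
  intros HS x y [s [Hs ->]] [t [Ht ->]].
  exists (s + t). split; [apply HS; assumption | lia].
Qed.

Lemma scaled_arf_closed (S : nat -> Prop) (a : nat) :
  0 < a -> arf_closed S -> arf_closed (scaled S a).
Proof.
  intros Ha HS x y z [s [Hs ->]] [t [Ht ->]] [u [Hu ->]] Hut Hts.
  apply Nat.mul_le_mono_pos_l in Hut, Hts; try assumption.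
  exists (s + t - u). split; [apply HS; assumption | nia].
Qed.

Lemma union_ge_add_closed (T : nat -> Prop) (R : nat) :
  add_closed T -> add_closed (union_ge T R).
Proof.
  intros HT x y [Hx | Hx] [Hy | Hy];
    [left; apply HT; assumption | right; lia ..].
Qed.

Lemma union_ge_arf_closed (T : nat -> Prop) (R : nat) :
  arf_closed T -> arf_closed (union_ge T R).
Proof.
  intros HT x y z Hx Hy Hz Hzy Hyx.
  destruct (le_lt_dec R x) as [HRx | HxR]; [right; lia |].
  destruct Hx as [Hx | Hx]; [| lia].
  destruct Hy as [Hy | Hy]; [| lia].
  destruct Hz as [Hz | Hz]; [| lia].
  left. apply HT; assumption.
Qed.

Lemma union_ge_numerical_semigroup (T : nat -> Prop) (R : nat) :
  T 0 -> add_closed T -> numerical_semigroup (union_ge T R).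
Proof.
  intros H0 HT. split; [| split].
  - left. exact H0.
  - apply union_ge_add_closed. exact HT.
  - exists R. intros n Hn. right. exact Hn.
Qed.

Lemma Arf_union_ge (T : nat -> Prop) (R : nat) :
  T 0 -> add_closed T -> arf_closed T -> Arf (union_ge T R).
Proof.
  intros H0 Hadd Harf. split.
  - apply union_ge_numerical_semigroup; assumption.
  - apply union_ge_arf_closed. exact Harf.
Qed.

Theorem mainTheorem10 (S : nat -> Prop) (a R : nat) :
  Arf S -> 0 < a -> 0 < R -> Arf (scaled_closure S a R).
Proof.
  intros [[H0 [Hadd _]] Harf] Ha _.
  rewrite scaled_closure_union_ge.
  apply Arf_union_ge.
  - exists 0. split; [exact H0 | lia].
  - apply scaled_add_closed. exact Hadd.
  - apply scaled_arf_closed; assumption.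
Qed.
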